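(* Let $G$ be a mean-payoff game with limited-observation and $\Gamma_G$ its associated reachability game. If Eve (respectively Adam) has a winning strategy in $\Gamma_G$, then Eve (respectively Adam) has a winning observation-based strategy with finite memory in $G$.
   Context: An MPG with limited-observation is a tuple $G=\langle Q,q_I,\Sigma,\Delta,w,Obs\rangle$: $Q$ finite set of states, $q_I\in Q$, $\Sigma$ finite set of actions, $\Delta\subseteq Q\times\Sigma\times Q$ total, $w:\Delta\to\mathbb{Z}$, $Obs$ a partition of $Q$, with $\{q_I\}\in Obs$ and, for each $o\in Obs,\sigma\in\Sigma$, $\mathrm{post}_\sigma(o)=\{q':\exists q\in o,(q,\sigma,q')\in\Delta\}$ a union of elements of $Obs$. Abstract paths $o_0\sigma_0o_1\ldots$ ($o_i\in Obs$, with some transition under $\sigma_i$ from $o_i$ to $o_{i+1}$), concrete paths $\gamma(\psi)$ (sequences $q_0\sigma_0q_1\ldots$ with $q_i\in o_i$, $(q_i,\sigma_i,q_{i+1})\in\Delta$), plays (infinite abstract paths starting at $\{q_I\}$), $\mathrm{Prefs}(G)$ (finite prefixes of plays ending in an observation), $\underline{MP}(\pi)=\liminf_n\frac1n\sum_{i<n}w(q_i,\sigma_i,q_{i+1})$. A play $\psi$ is winning for Eve if $\underline{MP}(\pi)\ge0$ for all $\pi\in\gamma(\psi)$, else for Adam. Observation-based strategies: for Eve $\lambda_\exists:\mathrm{Prefs}(G)\to\Sigma$; for Adam $\lambda_\forall:\mathrm{Prefs}(G)\times\Sigma\to Obs$ with $\lambda_\forall(o_0\ldots o_n,\sigma)\cap\mathrm{post}_\sigma(o_n)\ne\emptyset$;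 consistency as usual; winning if all consistent plays are winning. Eve's strategy has memory $m$ if there are $M$ with $|M|=m$, $m_0\in M$, $\alpha_u:M\times Obs\to M$, $\alpha_o:M\times Obs\to\Sigma$ with $\lambda_\exists(o_0\sigma_0\ldots o_n)=\alpha_o(m_n,o_n)$, $m_{i+1}=\alpha_u(m_i,o_i)$; Adam's has memory $m$ if there are $M$, $m_0$, $\alpha_u:M\times Obs\times\Sigma\to M$, $\alpha_o:M\times Obs\times\Sigma\to Obs$ with $\lambda_\forall(o_0\sigma_0\ldots o_n,\sigma_n)=\alpha_o(m_n,o_n,\sigma_n)$, $m_{i+1}=\alpha_u(m_i,o_i,\sigma_i)$. Finite memory means memory $m$ for some finite $m$. Reachability game $\Gamma_G$: let $\mathcal{F}$ be the set of functions $f:Q\to\mathbb{Z}\cup\{+\infty,\bot\}$, $\mathrm{supp}(f)=\{q:f(q)\ne\bot\}$. $f'$ is a $\sigma$-successor of $f$ if $\mathrm{supp}(f')\in Obs$, $\mathrm{supp}(f')\subseteq\mathrm{post}_\sigma(\mathrm{supp}(f))$, and for every $q\in\mathrm{supp}(f')$, $f'(q)$ equals either $\min\{f(q')+w(q',\sigma,q): q'\in\mathrm{supp}(f),(q',\sigma,q)\in\Delta\}$ or $+\infty$. For $k\in\mathbb{N}$, $f\preceq_k f'$ iff $\mathrm{supp}(f)=\mathrm{supp}(f')$ and $f(q)+k\le f'(q)$ for all $q\in\mathrm{supp}(f)$ (with $+\infty+k=+\infty$). Let $f_I(q_I)=0$ and $f_I(q)=\bot$ for $q\ne q_I$. $\Pi_G$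 is the set of sequences $f_0\sigma_0f_1\ldots\sigma_{n-1}f_n$ with $f_0=f_I$, each $f_{i+1}$ a $\sigma_i$-successor of $f_i$, and for all $0\le i<j<n$: $f_i\not\preceq_0 f_j$ and $f_j\not\preceq_1 f_i$. $\mathcal{T}_\exists$ is the set of such sequences with $f_i\preceq_0 f_n$ for some $i<n$; $\mathcal{T}_\forall$ is the set of such sequences with, for some $i<n$, $f_n\preceq_1 f_i$ and $f_i(q)\ne+\infty$ for some $q\in\mathrm{supp}(f_i)$. $\Gamma_G$ is played from the sequence $f_I$: at the current sequence $x$, Eve chooses $\sigma\in\Sigma$ and Adam chooses $f$ with $x\sigma f\in\Pi_G$; the game stops when the current sequence lies in $\mathcal{T}_\exists$ (Eve wins) or in $\mathcal{T}_\forall$ (Adam wins). A strategy in $\Gamma_G$ (a function from histories to actions for Eve, to successor sequences for Adam) is winning for Eve (Adam) if every play consistent with it reaches $\mathcal{T}_\exists$ ($\mathcal{T}_\forall$). *)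

From HB Require Import structures.
From mathcomp Require Import all_boot all_order all_algebra.
From mathcomp Require Import boolp classical_sets reals ereal topology sequences.
From mathcomp Require Import Rstruct.

Set Implicit Arguments.
Unset Strict Implicit.
Unset Printing Implicit Defensive.

Import Order.TTheory GRing.Theory Num.Theory.

(* Raw data of an MPG with limited observation
   G = <Q, q_I, Sigma, Delta, w, Obs>.  The weight function is given on all
   triples; only its values on Delta matter. Observations are subsets of Q. *)
Record mpg := MPG {
  St : finType;
  Act : finType;
  qI : St;
  Delta : St -> Act -> St -> bool;
  w : St -> Act -> St -> int;
  Obs : {set {set St}}
}.

Section MPG.
Variable G : mpg.
Local Notation Q := (St G).
Local Notation Sig := (Act G).

Definition post (s : Sig) (A : {set Q}) : {set Q} :=
  [set q' | [exists q in A, Delta q s q']].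

Definition wf_mpg : Prop :=
  (forall (q : Q) (s : Sig), exists q' : Q, Delta q s q') /\
  finset.partition (Obs G) [set: Q] /\
  [set qI G] \in Obs G /\
  (forall o s, o \in Obs G ->
     exists2 U : {set {set Q}}, U \subset Obs G &
       post s o = finset.cover U).

Definition is_play (o : nat -> {set Q}) (s : nat -> Sig) : Prop :=
  o 0%N = [set qI G] /\
  (forall i, o i \in Obs G) /\
  (forall i, exists q : Q, exists q' : Q,
      [/\ q \in o i, q' \in o i.+1 & Delta q (s i) q']).

Definition is_concrete (o : nat -> {set Q}) (s : nat -> Sig) (q : nat -> Q) : Prop :=
  forall i, q i \in o i /\ Delta (q i) (s i) (q i.+1).

Definition MP (s : nat -> Sig) (q : nat -> Q) : \bar Rdefinitions.R :=
  limn_einf (fun n : nat =>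
    (((\sum_(i < n) w (q i) (s i) (q i.+1))%:~R / n%:R : Rdefinitions.R)%:E)).

Definition play_winE (o : nat -> {set Q}) (s : nat -> Sig) : Prop :=
  forall q, is_concrete o s q -> (0 <= MP s q)%E.

(* Histories (finite sequences o_0 s_0 ... s_{n-1} o_n): the list of
   past (o_i, s_i) pairs, in chronological order, and the last observation. *)
Definition hist := (seq ({set Q} * Sig) * {set Q})%type.

Definition hist_of (o : nat -> {set Q}) (s : nat -> Sig) (n : nat) : hist :=
  ([seq (o i, s i) | i <- iota 0 n], o n).

Definition is_pref (h : hist) : Prop :=
  exists o s, is_play o s /\ h = hist_of o s (size h.1).

Definition stratE := hist -> Sig.
Definition stratA := hist -> Sig -> {set Q}.

Definition valid_stratA (l : stratA) : Prop :=
  forall h s, is_pref h ->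
    l h s \in Obs G /\ l h s :&: post s h.2 != finset.set0.

Definition consistentE (l : stratE) o s : Prop :=
  forall i, s i = l (hist_of o s i).

Definition consistentA (l : stratA) o s : Prop :=
  forall i, o i.+1 = l (hist_of o s i) (s i).

Definition winningE (l : stratE) : Prop :=
  forall o s, is_play o s -> consistentE l o s -> play_winE o s.

Definition winningA (l : stratA) : Prop :=
  forall o s, is_play o s -> consistentA l o s -> ~ play_winE o s.

(* Finite memory. The memory state after the prefix o_0 s_0 ... o_n is
   m_n, where m_{i+1} = alpha_u(m_i, o_i) (Eve) or alpha_u(m_i, o_i, s_i) (Adam). *)
Definition finite_memoryE (l : stratE) : Prop :=
  exists (M : finType) (m0 : M) (au : M -> {set Q} -> M) (ao : M -> {set Q} -> Sig),
    forall h, is_pref h ->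
      l h = ao (foldl (fun m p => au m p.1) m0 h.1) h.2.

Definition finite_memoryA (l : stratA) : Prop :=
  exists (M : finType) (m0 : M) (au : M -> {set Q} -> Sig -> M)
         (ao : M -> {set Q} -> Sig -> {set Q}),
    forall h s, is_pref h ->
      l h s = ao (foldl (fun m p => au m p.1 p.2) m0 h.1) h.2 s.

Definition Eve_wins_fm : Prop :=
  exists l : stratE, finite_memoryE l /\ winningE l.

Definition Adam_wins_fm : Prop :=
  exists l : stratA, valid_stratA l /\ finite_memoryA l /\ winningA l.

Inductive val := Bot | Inf | Fin of int.

Definition isBot (v : val) : bool := if v is Bot then true else false.

Definition vadd (v : val) (k : int) : val :=
  match v with Fin a => Fin (a + k) | Inf => Inf | Bot => Bot end.

Definition vle (u v : val) : Prop :=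
  match u, v with
  | Fin a, Fin b => (a <= b)%R
  | Fin _, Inf => True
  | Inf, Inf => True
  | _, _ => False
  end.

Definition fn := Q -> val.

Definition supp (f : fn) : {set Q} := [set q | ~~ isBot (f q)].

Definition is_min_pred (f : fn) (s : Sig) (q : Q) (v : val) : Prop :=
  (exists q', [/\ q' \in supp f, Delta q' s q & v = vadd (f q') (w q' s q)]) /\
  (forall q', q' \in supp f -> Delta q' s q -> vle v (vadd (f q') (w q' s q))).

Definition successor (f : fn) (s : Sig) (f' : fn) : Prop :=
  [/\ supp f' \in Obs G,
      supp f' \subset post s (supp f) &
      forall q, q \in supp f' -> is_min_pred f s q (f' q) \/ f' q = Inf].

Definition preceq (k : int) (f f' : fn) : Prop :=
  supp f = supp f' /\ forall q, q \in supp f -> vle (vadd (f q) k) (f' q).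

Definition fI : fn := fun q => if q == qI G then Fin 0 else Bot.

(* A sequence f_0 s_0 f_1 ... s_{n-1} f_n: list of the (f_i, s_i), i < n,
   and the last function f_n. *)
Definition gseq := (seq (fn * Sig) * fn)%type.

Definition glen (x : gseq) : nat := size x.1.
Definition gf (x : gseq) (i : nat) : fn := nth x.2 (map fst x.1) i.
Definition ga (x : gseq) (i : nat) (d : Sig) : Sig := nth d (map snd x.1) i.

Definition ext (x : gseq) (s : Sig) (f : fn) : gseq := (rcons x.1 (x.2, s), f).

Definition ginit : gseq := ([::], fI).

Definition in_Pi (x : gseq) : Prop :=
  (forall q, gf x 0 q = fI q) /\
  (forall i (d : Sig), (i < glen x)%N -> successor (gf x i) (ga x i d) (gf x i.+1)) /\
  (forall i j, (i < j)%N -> (j < glen x)%N ->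
     ~ preceq 0 (gf x i) (gf x j) /\ ~ preceq 1 (gf x j) (gf x i)).

Definition T_E (x : gseq) : Prop :=
  in_Pi x /\ exists2 i, (i < glen x)%N & preceq 0 (gf x i) (gf x (glen x)).

Definition T_A (x : gseq) : Prop :=
  in_Pi x /\ exists2 i, (i < glen x)%N &
     preceq 1 (gf x (glen x)) (gf x i) /\
     exists2 q, q \in supp (gf x i) & gf x i q <> Inf.

Definition terminal (x : gseq) : Prop := T_E x \/ T_A x.

(* Strategies in Gamma_G: the current sequence encodes the whole history. *)
Definition gstratE := gseq -> Sig.
Definition gstratA := gseq -> Sig -> fn.

(* Plays of Gamma_G as infinite sequences of positions; once a terminal
   position is reached the game stops (the position is repeated). *)
Definition gconsistentE (l : gstratE) (X : nat -> gseq) : Prop :=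
  X 0%N = ginit /\
  forall k, (terminal (X k) -> X k.+1 = X k) /\
            (~ terminal (X k) ->
               exists f, X k.+1 = ext (X k) (l (X k)) f /\ in_Pi (X k.+1)).

Definition gconsistentA (l : gstratA) (X : nat -> gseq) : Prop :=
  X 0%N = ginit /\
  forall k, (terminal (X k) -> X k.+1 = X k) /\
            (~ terminal (X k) ->
               exists s, X k.+1 = ext (X k) s (l (X k) s)).

Definition gwinningE (l : gstratE) : Prop :=
  forall X, gconsistentE l X -> exists k, T_E (X k).

Definition gwinningA (l : gstratA) : Prop :=
  forall X, gconsistentA l X -> (forall k, in_Pi (X k)) /\ exists k, T_A (X k).

Definition Eve_wins_Gamma : Prop := exists l, gwinningE l.
Definition Adam_wins_Gamma : Prop := exists l, gwinningA l.

End MPG.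

From Pilot Require Import Defs.
From mathcomp Require Import all_boot all_order all_algebra.
From mathcomp Require Import boolp classical_sets reals ereal sequences.
From mathcomp Require Import Rstruct lra zify.

Set Implicit Arguments.
Unset Strict Implicit.
Unset Printing Implicit Defensive.

Import Order.TTheory GRing.Theory Num.Theory.

(* Each player runs its winning strategy of [Gamma_G] inside [G], remembering
   the moves of the current play of [Gamma_G].  When this play reaches a
   terminal position [f_0 ... f_n], the witness [i] of [f_i <=_0 f_n] (for
   Eve) or [f_n <=_1 f_i] (for Adam) is used to cut it back to [f_0 ... f_i].
   By Koenig's lemma the winning strategy wins within a bounded number [D] of
   moves, so the stored plays have length less than [D]: the memory is finite.
   For Eve, the last function of the stored play bounds from below the weight
   of every concrete path reaching the current state, and its values are at
   least [- D * W], where [W] bounds the absolute weights; so partial sums are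
   bounded below and the mean payoff is nonnegative.  For Adam, each cut gains
   [1] and happens at least once every [D] steps.  Following minimal
   predecessors backwards, every finite value of the stored function is the
   weight of a concrete path plus at least the number of cuts so far; Koenig's
   lemma turns these finite paths into one infinite concrete path, whose
   weight after [n] steps is at most [D * W - n / D + 1]. *)

(** * Koenig's lemma and mean payoffs *)

Lemma mkseqSr (T : Type) (f : nat -> T) n :
  mkseq f n.+1 = rcons (mkseq f n) (f n).
Proof. by rewrite /mkseq -addn1 iotaD map_cat cats1. Qed.

Lemma take_rcons_le (T : Type) (s : seq T) x i :
  (i <= size s)%N -> take i (rcons s x) = take i s.
Proof. by move=> le_is; rewrite -cats1 takel_cat. Qed.

Section Koenig.
Variables (T : finType) (P : seq T -> Prop).
Hypothesis P_rcons : forall l x, P (rcons l x) -> P l.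

Lemma P_cat l l' : P (l ++ l') -> P l.
Proof.
elim/last_ind: l' => [|l' x IH]; first by rewrite cats0.
by rewrite -rcons_cat => /P_rcons.
Qed.

Let extensible l := forall n, exists2 l', size l' = n & P (l ++ l').

(* If every one-letter extension of [l] had extensions of bounded length
   only, the maximum of these finitely many bounds would bound the
   extensions of [l]. *)
Lemma extensible_rcons l : extensible l -> exists x, extensible (rcons l x).
Proof.
move=> ext_l; apply: contrapT => /forallNP no_ext.
have /choice [n short_n] : forall x, exists n,
    forall l', size l' = n -> ~ P (rcons l x ++ l').
  move=> x; have /existsNP [n no_ext_n] := no_ext x.
  by exists n => l' sl' Pl'; apply: no_ext_n; exists l'.
have [[|x l'] //= [sl']] := ext_l (\max_x n x).+1.
rewrite -cat_rcons -(cat_take_drop (n x) l') catA => /P_cat.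
apply: short_n; rewrite size_take_min sl'; apply/minn_idPl; exact: leq_bigmax.
Qed.

Lemma koenig : (forall n, exists2 l, size l = n & P l) ->
  exists f : nat -> T, forall n, P (mkseq f n).
Proof.
move=> ext_nil; have [x0 _] := @extensible_rcons [::] ext_nil.
have /choice [nx ext_nx] : forall l, exists x, extensible l -> extensible (rcons l x).
  move=> l; have [/extensible_rcons [x ?]|] := pselect (extensible l).
    by exists x.
  by exists x0.
pose fix branch n := if n is n'.+1 then rcons (branch n') (nx (branch n')) else [::].
have branchE n : branch n = mkseq (nx \o branch) n.
  by elim: n => [//|n IH]; rewrite mkseqSr -IH.
have ext_branch n : extensible (branch n) by elim: n => [|n IH] //=; apply: ext_nx.
exists (nx \o branch) => n; rewrite -branchE.
by have [[|//]] := ext_branch n 0%N; rewrite cats0.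
Qed.

Lemma koenig_bound : (forall f : nat -> T, exists n, ~ P (mkseq f n)) ->
  exists D, forall l, P l -> (size l < D)%N.
Proof.
move=> no_branch; apply: contrapT => /forallNP unbounded.
have [|f Pf] := koenig; last by have [n] := no_branch f; apply.
move=> n; have /existsNP [l /not_implyP [Pl /negP]] := unbounded n.
rewrite -leqNgt => le_nl; exists (take n l).
  by rewrite size_take_min; apply/minn_idPl.
by apply: (@P_cat _ (drop n l)); rewrite cat_take_drop.
Qed.

End Koenig.

Local Notation R := Rdefinitions.R.

Section MeanPayoff.
Variable u : nat -> int.

Let avg n : \bar R := (((u n)%:~R / n%:R : R)%:E).

Lemma limn_einf_avg_ge0 (C : int) :
  (0 <= C)%R -> (forall n, (- C <= u n)%R) -> (0 <= limn_einf avg)%E.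
Proof.
move=> C0 lb_u.
rewrite limn_einf_lim (cvg_lim _ (@cvg_einfs_sup _ avg)) //.
apply/lee_addgt0Pr => e e0.
pose N := (Num.Def.archi_bound ((C%:~R : R) / e)).+1.
have N_large : ((C%:~R : R) < N%:R * e)%R.
  have C_e : (0 <= (C%:~R : R) / e)%R by rewrite divr_ge0 ?ler0z // ltW.
  have := archi_boundP C_e; rewrite ltr_pdivrMr // => lt_Ce.
  by apply: lt_le_trans lt_Ce _; rewrite ler_pM2r // ler_nat.
have avg_ge : ((- e)%:E <= einfs avg N)%E.
  apply: le_ereal_inf_tmp => _ [k /= Nk <-]; rewrite /avg lee_fin.
  have k0 : (0 < k%:R :> R)%R by rewrite ltr0n (leq_trans _ Nk).
  rewrite ler_pdivlMr //.
  have Nk' : (N%:R <= k%:R :> R)%R by rewrite ler_nat.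
  have uk : (- (C%:~R : R) <= (u k)%:~R)%R by rewrite -mulrNz ler_int.
  nra.
have : (einfs avg N <= ereal_sup (range (einfs avg)))%E.
  by apply: ereal_sup_ubound; exists N.
by move=> /(le_trans avg_ge) /(leeD2r e%:E); rewrite -EFinD addNr.
Qed.

(* For [n >= 2 |A|], [u n / n <= (A - n) / (n * D) <= - 1 / (2 * D)]. *)
Lemma limn_einf_avg_lt0 (A : int) (D : nat) :
  (0 < D)%N -> (forall n, (u n * D%:Z + n%:Z <= A)%R) -> ~ (0 <= limn_einf avg)%E.
Proof.
move=> D0 ub_u avg_ge0.
pose Ar : R := `|(A%:~R : R)|%R.
pose N := (Num.Def.archi_bound (2 * Ar)%R).+1.
have N_large : (2 * Ar < N%:R :> R)%R.
  have := @archi_boundP _ (2 * Ar); rewrite mulr_ge0 ?normr_ge0 // => /(_ isT).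
  by move=> /lt_le_trans; apply; rewrite ler_nat.
have D0' : (0 < D%:R :> R)%R by rewrite ltr0n.
pose e : R := (2 * D%:R)^-1%R.
have e0 : (0 < e)%R by rewrite invr_gt0 mulr_gt0.
have De : (2 * D%:R * e = 1 :> R)%R by rewrite mulfV // mulf_neq0 ?pnatr_eq0 ?gt_eqF.
have avg_le : (esups avg N <= (- e)%:E)%E.
  apply: ge_ereal_sup => _ [k /= Nk <-]; rewrite /avg lee_fin.
  have k0 : (0 < k%:R :> R)%R by rewrite ltr0n (leq_trans _ Nk).
  rewrite ler_pdivrMr //.
  have Nk' : (N%:R <= k%:R :> R)%R by rewrite ler_nat.
  have uk : ((u k)%:~R * D%:R + k%:R <= (A%:~R : R))%R.
    by have := ub_u k; rewrite -(ler_int R) intrD intrM.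
  have AAr : ((A%:~R : R) <= Ar)%R by apply: ler_norm.
  nra.
have : (limn_einf avg <= esups avg N)%E.
  apply: le_trans (limn_einf_sup _) _.
  rewrite limn_esup_lim (cvg_lim _ (@cvg_esups_inf _ avg)) //.
  by apply: ereal_inf_lbound; exists N.
move=> /(le_trans avg_ge0) /le_trans /(_ avg_le); rewrite lee_fin oppr_ge0.
by move=> /(lt_le_trans e0); rewrite ltxx.
Qed.

End MeanPayoff.

(** * The game and its observations *)

Lemma vle_refl v : v <> Bot -> vle v v.
Proof. by case: v => //= a. Qed.

Lemma vle_trans u v t : vle u v -> vle v t -> vle u t.
Proof. by case: u v t => [||a] [||b] [||c] //=; apply: le_trans. Qed.

Lemma vle_total u v : u <> Bot -> v <> Bot -> vle u v \/ vle v u.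
Proof. by case: u v => [||a] [||b] //= _ _; [left|right|left|exact/orP/le_total]. Qed.

Lemma vle_vadd u v k : vle u v -> vle (vadd u k) (vadd v k).
Proof. by case: u v => [||a] [||b] //=; rewrite lerD2r. Qed.

Lemma exists_vle_min (T : finType) (P : pred T) (v : T -> Defs.val) :
  (forall x, P x -> v x <> Bot) -> (exists x, P x) ->
  exists x, P x /\ forall y, P y -> vle (v x) (v y).
Proof.
move=> vP [x0 Px0].
suff /(_ (enum T)) [|x [_ Px minx]] : forall r, has P r -> exists x,
    [/\ x \in r, P x & forall y, y \in r -> P y -> vle (v x) (v y)].
- by apply/hasP; exists x0; rewrite ?mem_enum.
- by exists x; split => // y; apply: minx; rewrite mem_enum.
elim=> [//|a r IH] /=; case: (boolP (P a)) => [Pa _ | nPa /= /IH [x [xr Px minx]]].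
  have [/IH [x [xr Px minx]] | /hasPn noP] := boolP (has P r).
    have [le_ax|le_xa] := vle_total (vP a Pa) (vP x Px).
      exists a; split; rewrite ?mem_head // => y /[!inE] /orP[/eqP-> _|yr Py].
        exact: vle_refl (vP a Pa).
      exact: vle_trans le_ax (minx y yr Py).
    exists x; split; rewrite ?inE ?xr ?orbT // => y /[!inE] /orP[/eqP-> _//|].
    exact: minx.
  exists a; split; rewrite ?mem_head // => y /[!inE] /orP[/eqP-> _|/noP/negbTE->//].
  exact: vle_refl (vP a Pa).
exists x; split; rewrite ?inE ?xr ?orbT // => y /[!inE] /orP[/eqP->|].
  by rewrite (negbTE nPa).
exact: minx.
Qed.

Section Game.
Variable G : mpg.
Local Notation Q := (St G).
Local Notation Sig := (Act G).
Implicit Types (f : fn G) (s : Sig) (o : {set Q}) (q : Q).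

Definition wmax : int := (\max_(t : Q * Sig * Q) absz (@w G t.1.1 t.1.2 t.2))%:Z.

Lemma w_bounded (q : Q) (s : Sig) (q' : Q) : (- wmax <= w q s q' <= wmax)%R.
Proof.
rewrite -ler_norml -abszE lez_nat.
exact: (@leq_bigmax _ (fun t : Q * Sig * Q => absz (@w G t.1.1 t.1.2 t.2)) (q, s, q')).
Qed.

Lemma supp_fI : supp (@fI G) = [set qI G].
Proof. by apply/setP => q; rewrite !inE /fI; case: eqP. Qed.

Lemma preceq0_vle f f' q : preceq 0 f f' -> q \in supp f -> vle (f q) (f' q).
Proof. by case=> _ /(_ q) le_ff' /le_ff'; case: (f q) => //= a; rewrite addr0. Qed.

Lemma preceq0_refl f : preceq 0 f f.
Proof. by split=> // q; rewrite inE; case: (f q) => //= a _; rewrite addr0. Qed.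

Definition argmin_pred (f : fn G) (s : Sig) (q : Q) : Q :=
  xget (qI G) (fun q' => [/\ q' \in supp f, Delta q' s q &
    forall q'', q'' \in supp f -> Delta q'' s q ->
      vle (vadd (f q') (w q' s q)) (vadd (f q'') (w q'' s q))]).

Definition min_succ (f : fn G) (s : Sig) (o : {set Q}) : fn G :=
  fun q => if q \in o then vadd (f (argmin_pred f s q)) (w (argmin_pred f s q) s q)
           else Bot.

Lemma vadd_supp (f : fn G) q k : q \in supp f -> vadd (f q) k <> Bot.
Proof. by rewrite inE; case: (f q). Qed.

Lemma min_succ_min_pred f s o q : q \in o -> o \subset post s (supp f) ->
  is_min_pred f s q (min_succ f s o q).
Proof.
move=> qo /fintype.subsetP /(_ q qo); rewrite inE => /existsP [q0 /andP [q0f Dq0]].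
pose pred_q := [pred q' | (q' \in supp f) && Delta q' s q].
have pred_fin q' : pred_q q' -> vadd (f q') (w q' s q) <> Bot.
  by case/andP => q'f _; apply: vadd_supp.
have [|q' [/andP [q'f Dq'] minq']] := exists_vle_min pred_fin.
  by exists q0; rewrite /= q0f.
have [] := @xgetPex _ (qI G) (fun q' => [/\ q' \in supp f, Delta q' s q &
    forall q'', q'' \in supp f -> Delta q'' s q ->
      vle (vadd (f q') (w q' s q)) (vadd (f q'') (w q'' s q))]).
  by exists q'; split => // q'' q''f Dq''; apply: minq'; rewrite /= q''f.
rewrite /min_succ qo -/(argmin_pred f s q) => af Da mina.
by split; [exists (argmin_pred f s q)|].
Qed.

Lemma supp_min_succ f s o : o \subset post s (supp f) -> supp (min_succ f s o) = o.
Proof.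
move=> sub_o; apply/setP => q; rewrite inE.
case: (boolP (q \in o)) => [qo | /negbTE qNo]; last by rewrite /min_succ qNo.
have [[q' [q'f _ ->]] _] := min_succ_min_pred qo sub_o.
by case: (vadd _ _) (vadd_supp (k := w q' s q) q'f).
Qed.

Lemma min_succ_successor f s o : o \in Obs G -> o \subset post s (supp f) ->
  successor f s (min_succ f s o).
Proof.
move=> oO sub_o; rewrite /successor supp_min_succ //; split=> // q qo.
by left; apply: min_succ_min_pred.
Qed.

Lemma successor_pred f s f' q : successor f s f' -> q \in supp f' -> f' q <> Inf ->
  exists q', [/\ q' \in supp f, Delta q' s q & f' q = vadd (f q') (w q' s q)].
Proof. by case=> _ _ f'min /f'min [[[q' ?] _] | ->]; [exists q'|]. Qed.

End Game.

Section Observations.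
Variable G : mpg.
Hypothesis HG : wf_mpg G.
Local Notation Q := (St G).
Local Notation Sig := (Act G).
Implicit Types (s : Sig) (o : {set Q}) (q : Q).

Let Obs_partition : finset.partition (Obs G) [set: Q].
Proof. by case: HG => _ []. Qed.

Lemma obs_neq0 o : o \in Obs G -> exists q, q \in o.
Proof.
move=> oO; have /and3P [_ _ O0] := Obs_partition.
by have [o0|[q qo]] := set_0Vmem o; [move: O0; rewrite -o0 oO | exists q].
Qed.

Lemma obs_eq o1 o2 q :
  o1 \in Obs G -> o2 \in Obs G -> q \in o1 -> q \in o2 -> o1 = o2.
Proof.
have /and3P [_ triv _] := Obs_partition.
move=> o1O o2O qo1 qo2.
by rewrite -(finset.def_pblock triv o1O qo1) (finset.def_pblock triv o2O qo2).
Qed.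

Lemma obs_sub_post o o' s q : o \in Obs G -> o' \in Obs G ->
  q \in o' -> q \in post s o -> o' \subset post s o.
Proof.
move=> oO o'O qo'; case: HG => _ [_ [_ /(_ o s oO) [U UO ->]]].
move=> /bigcupP [u uU qu]; have -> : o' = u.
  by apply: obs_eq qo' qu => //; apply: (fintype.subsetP UO).
by apply/fintype.subsetP => q' q'u; apply/bigcupP; exists u.
Qed.

Lemma exists_obs_sub_post o s : o \in Obs G ->
  exists2 o', o' \in Obs G & o' \subset post s o.
Proof.
move=> oO; have [q qo] := obs_neq0 oO; have [q' Dq'] := HG.1 q s.
have /and3P [/eqP cover_Obs _ _] := Obs_partition.
have q'O : q' \in finset.cover (Obs G) by rewrite cover_Obs inE.
exists (finset.pblock (Obs G) q'); first exact: finset.pblock_mem.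
apply: (obs_sub_post (q := q') oO (finset.pblock_mem q'O)).
  by rewrite finset.mem_pblock.
by rewrite inE; apply/existsP; exists q; rewrite qo.
Qed.

Lemma play_sub_post (o : nat -> {set Q}) (s : nat -> Sig) k :
  is_play o s -> o k.+1 \subset post (s k) (o k).
Proof.
case=> _ [playO play_D]; have [q [q' [qo q'o Dqq']]] := play_D k.
apply: (obs_sub_post (playO k) (playO k.+1) q'o).
by rewrite inE; apply/existsP; exists q; rewrite qo.
Qed.

End Observations.

Section Plays.
Variable G : mpg.

Lemma hist_ofS (o : nat -> {set St G}) (s : nat -> Act G) k :
  (hist_of o s k.+1).1 = rcons (hist_of o s k).1 (o k, s k).
Proof. exact: (mkseqSr (fun i => (o i, s i))). Qed.

Definition wsum (s : nat -> Act G) (q : nat -> St G) k : int :=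
  \sum_(i < k) w (q i) (s i) (q i.+1).

Lemma wsumS s q k : wsum s q k.+1 = (wsum s q k + w (q k) (s k) (q k.+1))%R.
Proof. by rewrite /wsum big_ord_recr. Qed.

Lemma eq_wsum s (q q' : nat -> St G) n :
  (forall j, (j <= n)%N -> q j = q' j) -> wsum s q n = wsum s q' n.
Proof.
move=> qq'; apply: eq_bigr => i _.
by rewrite !qq' ?(ltnW (ltn_ord i)) ?ltn_ord.
Qed.

End Plays.

(** * Plays of [Gamma_G] *)

Section Positions.
Variable G : mpg.
Implicit Types (x : gseq G) (s : Act G) (f : fn G).

Lemma glen_ext x s f : glen (ext x s f) = (glen x).+1.
Proof. by rewrite /glen size_rcons. Qed.

Lemma gf_last x : gf x (glen x) = x.2.
Proof. by rewrite /gf nth_default // size_map. Qed.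

Lemma gf_ext x s f i : (i <= glen x)%N -> gf (ext x s f) i = gf x i.
Proof.
rewrite /gf /= map_rcons nth_rcons size_map leq_eqVlt => /orP [/eqP->|lt_ix].
  by rewrite ltnn eqxx nth_default ?size_map.
by rewrite lt_ix; apply: set_nth_default; rewrite size_map.
Qed.

Lemma gf_ext_last x s f : gf (ext x s f) (glen x).+1 = f.
Proof. by rewrite -(glen_ext x s f) gf_last. Qed.

Lemma ga_ext x s f i d :
  ga (ext x s f) i d = if (i < glen x)%N then ga x i d else if i == glen x then s else d.
Proof. by rewrite /ga /= map_rcons nth_rcons size_map. Qed.

Lemma in_Pi_init : in_Pi (ginit G).
Proof. by split. Qed.

Lemma not_terminal_init : ~ terminal (ginit G).
Proof. by case=> [[_ []]|[_ []]]. Qed.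

(* [in_Pi] also forbids [f_n <=_1 f_i] when [f_i] is identically [+oo],
   which [~ T_A x] does not exclude: hence the last hypothesis. *)
Lemma in_Pi_ext x s f : in_Pi x -> ~ terminal x -> successor x.2 s f ->
  (forall i, (i < glen x)%N -> exists2 q, q \in supp (gf x i) & gf x i q <> Inf) ->
  in_Pi (ext x s f).
Proof.
move=> x_Pi x_nterm succ_f x_fin; have [x0 [x_succ x_incomp]] := x_Pi.
split; [|split].
- by move=> q; rewrite gf_ext.
- move=> i d; rewrite glen_ext ltnS leq_eqVlt ga_ext => /orP [/eqP-> | lt_ix].
    by rewrite ltnn eqxx gf_ext // gf_last gf_ext_last.
  by rewrite lt_ix !gf_ext ?(ltnW lt_ix) //; apply: x_succ.
move=> i j lt_ij; rewrite glen_ext ltnS leq_eqVlt => /orP [/eqP jx | lt_jx].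
  subst j; rewrite !gf_ext ?(ltnW lt_ij) //; split => prec.
    by apply: x_nterm; left; split => //; exists i.
  by apply: x_nterm; right; split => //; exists i => //; split => //; apply: x_fin.
by rewrite !gf_ext ?(ltnW lt_jx) ?(ltnW (ltn_trans lt_ij lt_jx)) //; apply: x_incomp.
Qed.

Lemma in_Pi_gf_le x (d : Act G) i q a : in_Pi x -> (i <= glen x)%N ->
  gf x i q = Fin a -> (a <= i%:Z * wmax G)%R.
Proof.
move=> [x0 [x_succ _]]; elim: i q a => [|i IH] q a le_ix.
  by rewrite x0 /fI; case: eqP => // _ [<-]; rewrite mul0r.
move=> xa; have qi : q \in supp (gf x i.+1) by rewrite inE xa.
have [|q' [q'i _]] := successor_pred (x_succ i d le_ix) qi; first by rewrite xa.
rewrite xa; case xq': (gf x i q') => [||b] //= [->].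
have /andP [_ ub_w] := w_bounded q' (ga x i d) q.
by rewrite -addn1 PoszD mulrDl mul1r lerD // (IH q' b (ltnW le_ix)).
Qed.

End Positions.

Section Unfolding.
Variables (G : mpg) (A : finType).
Variables (act : gseq G -> A -> Act G) (next : gseq G -> A -> fn G).
Implicit Types (L : seq A) (a : A) (x : gseq G).

Definition gstep x a : gseq G := ext x (act x a) (next x a).

Definition gpos L : gseq G := foldl gstep (ginit G) L.

Lemma gpos_rcons L a : gpos (rcons L a) = gstep (gpos L) a.
Proof. by rewrite /gpos foldl_rcons. Qed.

Lemma glen_gpos L : glen (gpos L) = size L.
Proof.
by elim/last_ind: L => [//|L a IH]; rewrite gpos_rcons glen_ext IH size_rcons.
Qed.

Lemma gf_gpos L i : (i <= size L)%N -> gf (gpos L) i = (gpos (take i L)).2.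
Proof.
elim/last_ind: L i => [|L a IH] i; first by rewrite leqn0 => /eqP->.
rewrite size_rcons leq_eqVlt => /orP [/eqP-> | ].
  by rewrite take_oversize ?size_rcons // -(size_rcons L a) -glen_gpos gf_last.
rewrite ltnS => le_iL; rewrite take_rcons_le // gpos_rcons gf_ext ?glen_gpos //.
exact: IH.
Qed.

Definition alive L := forall j, (j <= size L)%N -> ~ terminal (gpos (take j L)).

Lemma alive_nil : alive [::].
Proof. by move=> j _; apply: not_terminal_init. Qed.

Lemma alive_nterm L : alive L -> ~ terminal (gpos L).
Proof. by move=> /(_ (size L) (leqnn _)); rewrite take_size. Qed.

Lemma alive_take L i : alive L -> alive (take i L).
Proof.
move=> L_alive j; rewrite size_take_min leq_min => /andP [le_ji le_jL].
by rewrite take_takel //; apply: L_alive.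
Qed.

Lemma alive_belast L a : alive (rcons L a) -> alive L.
Proof. by move=> /(alive_take (i := size L)); rewrite take_rcons_le ?take_size. Qed.

Lemma alive_rcons L a :
  alive L -> ~ terminal (gpos (rcons L a)) -> alive (rcons L a).
Proof.
move=> L_alive nterm j; rewrite size_rcons leq_eqVlt => /orP [/eqP-> | ].
  by rewrite take_oversize ?size_rcons.
by rewrite ltnS => le_jL; rewrite take_rcons_le //; apply: L_alive.
Qed.

Fixpoint run (c : nat -> A) k : gseq G :=
  if k is k'.+1 then
    if pselect (terminal (run c k')) then run c k' else gstep (run c k') (c k')
  else ginit G.

Lemma run_mkseq c k :
  run c k = gpos (mkseq c k) \/ exists j, terminal (gpos (mkseq c j)).
Proof.
elim: k => [|k [IH|IH]] /=; [by left | | by right].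
case: pselect => term_k /=; first by right; exists k; rewrite -IH.
by left; rewrite IH mkseqSr gpos_rcons.
Qed.

Lemma run_take L d k : (k <= size L)%N ->
  (forall j, (j < k)%N -> ~ terminal (gpos (take j L))) ->
  run (nth d L) k = gpos (take k L).
Proof.
elim: k => [|k IH] lt_kL nterm /=; first by rewrite take0.
have -> : run (nth d L) k = gpos (take k L).
  by apply: IH => [|j lt_jk]; [exact: ltnW | apply: nterm; exact: ltnW].
have := nterm k (ltnSn k); case: pselect => // term_k _.
by rewrite (take_nth d lt_kL) gpos_rcons.
Qed.

Lemma run_stop c k m : terminal (run c k) -> (k <= m)%N -> run c m = run c k.
Proof.
move=> term_k /subnKC <-; elim: (m - k)%N => [|n IH]; first by rewrite addn0.
by rewrite addnS /= IH; case: pselect.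
Qed.

Lemma run_rcons L a k : alive L -> (k <= (size L).+1)%N ->
  run (nth a (rcons L a)) k = gpos (take k (rcons L a)).
Proof.
move=> L_alive le_kL; apply: run_take; first by rewrite size_rcons.
move=> j /leq_trans /(_ le_kL); rewrite ltnS => le_jL.
by rewrite take_rcons_le //; apply: L_alive.
Qed.

Section Winning.
Variable T : gseq G -> Prop.
Hypothesis T_terminal : forall x, T x -> terminal x.
Hypothesis run_T : forall c, exists k, T (run c k).
Variable R : gseq G -> nat -> Prop.
Hypothesis T_R : forall x, T x -> exists2 i, (i < glen x)%N & R x i.

Lemma alive_bounded : exists D, forall L, alive L -> (size L < D)%N.
Proof.
apply: koenig_bound => [L a /alive_belast // | c].
have [k Tk] := run_T c; have [run_k | [j term_j]] := run_mkseq c k.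
  by exists k => /alive_nterm; rewrite -run_k; apply; apply: T_terminal.
by exists j => /alive_nterm.
Qed.

Lemma terminal_T L a : alive L -> terminal (gpos (rcons L a)) -> T (gpos (rcons L a)).
Proof.
move=> L_alive term_La; have [k Tk] := run_T (nth a (rcons L a)).
have [le_kL | lt_Lk] := leqP k (size L).
  move: Tk; rewrite run_rcons ?take_rcons_le ?(leq_trans le_kL) //.
  by move=> /T_terminal /(L_alive k le_kL).
by move: Tk; rewrite (run_stop _ lt_Lk) run_rcons ?take_oversize ?size_rcons.
Qed.

Definition reset_index x : nat := xget 0%N (fun i => (i < glen x)%N /\ R x i).

Definition normalize L : seq A :=
  if pselect (terminal (gpos L)) then take (reset_index (gpos L)) L else L.

Lemma normalize_nterm L : ~ terminal (gpos L) -> normalize L = L.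
Proof. by rewrite /normalize; case: pselect. Qed.

Lemma normalize_term L a : alive L -> terminal (gpos (rcons L a)) ->
  exists2 i, (i <= size L)%N & normalize (rcons L a) = take i L /\ R (gpos (rcons L a)) i.
Proof.
move=> L_alive term_La; rewrite /normalize; case: pselect => // term_La'.
set x := gpos (rcons L a).
have [] := @xgetPex _ 0%N (fun i => (i < glen x)%N /\ R x i).
  by have [i] := T_R (terminal_T L_alive term_La); exists i.
rewrite -/(reset_index x) /x glen_gpos size_rcons ltnS => le_iL Ri.
by exists (reset_index x); rewrite ?take_rcons_le.
Qed.

Lemma alive_normalize L a : alive L -> alive (normalize (rcons L a)).
Proof.
move=> L_alive; have [term_La | nterm_La] := pselect (terminal (gpos (rcons L a))).
  by have [i _ [-> _]] := normalize_term L_alive term_La; apply: alive_take.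
by rewrite normalize_nterm //; apply: alive_rcons.
Qed.

Fixpoint traj (c : nat -> A) k : seq A :=
  if k is k'.+1 then normalize (rcons (traj c k') (c k')) else [::].

Lemma alive_traj c k : alive (traj c k).
Proof. by elim: k => [|k IH]; [apply: alive_nil | apply: alive_normalize]. Qed.

Section Memory.
Variable D : nat.
Hypothesis alive_lt_D : forall L, alive L -> (size L < D)%N.

Definition mem_step (m : D.-bseq A) a : D.-bseq A :=
  insub_bseq D (normalize (rcons m a)).

Lemma mem_stepE (m : D.-bseq A) a :
  alive m -> mem_step m a = normalize (rcons m a) :> seq A.
Proof.
move=> /(alive_normalize (a := a)) /alive_lt_D /ltnW le_D.
by rewrite /mem_step /insub_bseq insubdK.
Qed.

End Memory.

End Winning.

End Unfolding.

(** * Eve *)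

Section Eve.
Variable G : mpg.
Hypothesis HG : wf_mpg G.
Local Notation Q := (St G).
Local Notation Sig := (Act G).
Implicit Types (f : fn G) (s : Sig) (o : {set Q}) (q : Q) (x : gseq G).
Variable lE : gstratE G.
Hypothesis lE_wins : gwinningE lE.

Definition eve_valid_obs f s o := (o \in Obs G) && (o \subset post s (supp f)).

(* Adam's moves in the unfolding are observations; invalid ones are replaced
   by a valid one so that every sequence of observations yields a play. *)
Definition eve_fix_obs f s o : {set Q} :=
  if eve_valid_obs f s o then o else odflt finset.set0 [pick o' | eve_valid_obs f s o'].

Lemma eve_valid_fix_obs f s o : supp f \in Obs G -> eve_valid_obs f s (eve_fix_obs f s o).
Proof.
rewrite /eve_fix_obs; case: ifP => // _ fO; case: pickP => // noO.
have [o' o'O sub_o'] := exists_obs_sub_post HG s fO.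
by move: (noO o'); rewrite /eve_valid_obs o'O sub_o'.
Qed.

Definition eve_act x (_ : {set Q}) : Sig := lE x.
Definition eve_next x o : fn G := min_succ x.2 (lE x) (eve_fix_obs x.2 (lE x) o).

Local Notation epos := (gpos eve_act eve_next).
Local Notation erun := (run eve_act eve_next).

Definition eve_inv x := forall i, (i <= glen x)%N ->
  supp (gf x i) \in Obs G /\
  forall q, q \in supp (gf x i) ->
    exists a, gf x i q = Fin a /\ (- (i%:Z * wmax G) <= a)%R.

Lemma eve_inv_init : eve_inv (ginit G).
Proof.
move=> i; rewrite leqn0 => /eqP->; rewrite /gf /= supp_fI.
split; first by case: HG => _ [_ []].
by move=> q /set1P ->; exists 0%R; rewrite /fI eqxx mul0r oppr0.
Qed.

Lemma eve_inv_step x o : eve_inv x -> eve_inv (gstep eve_act eve_next x o).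
Proof.
move=> x_inv i; rewrite glen_ext leq_eqVlt ltnS => /orP [/eqP-> | le_ix]; last first.
  by rewrite gf_ext //; apply: x_inv.
have [xO x_lb] := x_inv _ (leqnn _); rewrite gf_last in xO x_lb.
have /andP [oO sub_o] := eve_valid_fix_obs (lE x) o xO.
rewrite gf_ext_last /eve_next supp_min_succ //; split => // q qo.
have [[q' [q'x Dq' ->]] _] := min_succ_min_pred qo sub_o.
have [a [-> lb_a]] := x_lb q' q'x; exists (a + w q' (lE x) q)%R; split => //.
have /andP [lb_w _] := w_bounded q' (lE x) q.
by rewrite -addn1 PoszD mulrDl mul1r opprD lerD.
Qed.

Lemma eve_inv_gpos L : eve_inv (epos L).
Proof.
elim/last_ind: L => [|L o IH]; first exact: eve_inv_init.
by rewrite gpos_rcons; apply: eve_inv_step.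
Qed.

Lemma in_Pi_eve_step x o : in_Pi x -> eve_inv x -> ~ terminal x ->
  in_Pi (gstep eve_act eve_next x o).
Proof.
move=> x_Pi x_inv x_nterm; have [xO _] := x_inv _ (leqnn _); rewrite gf_last in xO.
have /andP [oO sub_o] := eve_valid_fix_obs (lE x) o xO.
apply: in_Pi_ext => //; first exact: min_succ_successor.
move=> i /ltnW /x_inv [/(obs_neq0 HG) [q qi] i_fin]; exists q => //.
by have [a [-> _]] := i_fin q qi.
Qed.

Lemma eve_run_inv c k : in_Pi (erun c k) /\ eve_inv (erun c k).
Proof.
elim: k => [|k [IH_Pi IH_inv]] /=.
  by split; [exact: in_Pi_init | exact: eve_inv_init].
case: pselect => [term | nterm]; first by split.
split; [exact: in_Pi_eve_step | exact: eve_inv_step].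
Qed.

Lemma eve_run_T c : exists k, T_E (erun c k).
Proof.
apply: lE_wins; split => // k; split => [|nterm] /=; first by case: pselect.
case: pselect => // nterm'; eexists; split; first by [].
by have [k_Pi k_inv] := eve_run_inv c k; apply: in_Pi_eve_step.
Qed.

Definition eve_reset x i := preceq 0 (gf x i) (gf x (glen x)).

Let T_E_terminal x : T_E x -> terminal x.
Proof. by left. Qed.

Let T_E_reset x : T_E x -> exists2 i, (i < glen x)%N & eve_reset x i.
Proof. by case. Qed.

Lemma eve_alive_bounded :
  exists D, forall L, alive eve_act eve_next L -> (size L < D)%N.
Proof. exact: alive_bounded T_E_terminal eve_run_T. Qed.

Let eve_alive_traj c k : alive eve_act eve_next (traj eve_act eve_next eve_reset c k).
Proof. exact: (alive_traj T_E_terminal eve_run_T T_E_reset (c := c) (k := k)). Qed.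

Section EveStrategy.
Variable D : nat.
Hypothesis alive_lt_D : forall L, alive eve_act eve_next L -> (size L < D)%N.

(* The memory is [None] until [o_0 = {q_I}] has been read: the observations
   played in the unfolding are [o_1, o_2, ...]. *)
Definition eve_mem_next (m : option (D.-bseq {set Q})) o : D.-bseq {set Q} :=
  if m is Some L then mem_step eve_act eve_next eve_reset L o else [bseq].

Definition eve_mem (h : hist G) : option (D.-bseq {set Q}) :=
  foldl (fun m p => Some (eve_mem_next m p.1)) None h.1.

Definition eve_strategy : stratE G := fun h => lE (epos (eve_mem_next (eve_mem h) h.2)).

Lemma eve_strategy_fm : finite_memoryE eve_strategy.
Proof.
by exists (option (D.-bseq {set Q})), None,
  (fun m o => Some (eve_mem_next m o)), (fun m o => lE (epos (eve_mem_next m o))).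
Qed.

Section EvePlay.
Variables (o : nat -> {set Q}) (s : nat -> Sig).
Hypothesis o_s_play : is_play o s.
Hypothesis s_eve : consistentE eve_strategy o s.

Let L k := traj eve_act eve_next eve_reset (fun i => o i.+1) k.
Let F k := (epos (L k)).2.

Lemma eve_memS k :
  eve_mem (hist_of o s k.+1) = Some (eve_mem_next (eve_mem (hist_of o s k)) (o k)).
Proof. by rewrite /eve_mem hist_ofS foldl_rcons. Qed.

Lemma eve_mem_traj k : eve_mem_next (eve_mem (hist_of o s k)) (o k) = L k :> seq _.
Proof.
elim: k => [//|k IH]; rewrite eve_memS /=.
rewrite (mem_stepE T_E_terminal eve_run_T T_E_reset alive_lt_D) IH //.
exact: eve_alive_traj.
Qed.

Lemma s_eve_traj k : s k = lE (epos (L k)).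
Proof. by rewrite s_eve /eve_strategy /= eve_mem_traj. Qed.

Lemma eve_traj_step k : supp (F k) = o k ->
  preceq 0 (F k.+1) (min_succ (F k) (s k) (o k.+1)).
Proof.
move=> suppF; set L' := rcons (L k) (o k.+1).
have valid : eve_valid_obs (F k) (s k) (o k.+1).
  by rewrite /eve_valid_obs suppF play_sub_post // andbT; case: o_s_play => _ [].
have lastL' : (epos L').2 = min_succ (F k) (s k) (o k.+1).
  by rewrite gpos_rcons /= /eve_next -s_eve_traj /eve_fix_obs valid.
rewrite {1}/F /L /= -/(L k) -/L'.
have [term | nterm] := pselect (terminal (epos L')).
  have [i le_ik [-> Ri]] :=
    normalize_term T_E_terminal eve_run_T T_E_reset (eve_alive_traj (k := k)) term.
  move: Ri; rewrite /eve_reset gf_last lastL' gf_gpos ?size_rcons ?(leqW le_ik) //.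
  by rewrite take_rcons_le.
by rewrite (normalize_nterm _ nterm) lastL'; apply: preceq0_refl.
Qed.

Lemma eve_traj_inv k : supp (F k) = o k /\
  forall q : nat -> Q, is_concrete o s q -> vle (F k (q k)) (Fin (wsum s q k)).
Proof.
elim: k => [|k [suppF boundF]].
  rewrite /F /L /= supp_fI; case: o_s_play => o0 _; rewrite o0.
  split => // q /(_ 0%N) []; rewrite o0 => /set1P-> _.
  by rewrite /fI eqxx /wsum big_ord0.
have prec := eve_traj_step suppF.
have sub : o k.+1 \subset post (s k) (supp (F k)) by rewrite suppF play_sub_post.
have suppF' := supp_min_succ sub.
split; first by rewrite prec.1.
move=> q q_conc; have [qk Dk] := q_conc k; have [qk1 _] := q_conc k.+1.
apply: vle_trans (preceq0_vle prec _) _; first by rewrite prec.1 suppF'.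
have [_ minF'] := min_succ_min_pred qk1 sub.
apply: vle_trans (minF' (q k) _ Dk) _; first by rewrite suppF.
by rewrite wsumS; apply: (vle_vadd _ (boundF q q_conc)).
Qed.

Lemma eve_play_wins : play_winE o s.
Proof.
move=> q q_conc; apply: (@limn_einf_avg_ge0 (wsum s q) (D%:Z * wmax G)) => // n.
have [suppF boundF] := eve_traj_inv n; have [qn _] := q_conc n.
have [_ /(_ (q n))] := eve_inv_gpos (L := L n) (leqnn _).
rewrite gf_last -/(F n) suppF glen_gpos => /(_ qn) [a [Fa lb_a]].
move: (boundF q q_conc); rewrite Fa /= => /(le_trans lb_a); apply: le_trans.
rewrite lerN2 ler_wpM2r // lez_nat ltnW //; apply: alive_lt_D; exact: eve_alive_traj.
Qed.

End EvePlay.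

Lemma eve_strategy_wins : winningE eve_strategy.
Proof. by move=> o s; apply: eve_play_wins. Qed.

End EveStrategy.

End Eve.

(** * Adam *)

Section Adam.
Variable G : mpg.
Hypothesis HG : wf_mpg G.
Local Notation Q := (St G).
Local Notation Sig := (Act G).
Implicit Types (f : fn G) (s : Sig) (o : {set Q}) (x : gseq G).
Variable lA : gstratA G.
Hypothesis lA_wins : gwinningA lA.

Definition adam_act x s : Sig := s.
Definition adam_next x s : fn G := lA x s.

Local Notation apos := (gpos adam_act adam_next).
Local Notation arun := (run adam_act adam_next).

Lemma adam_run_consistent c : gconsistentA lA (arun c).
Proof.
split => // k; split => [|nterm] /=; first by case: pselect.
by case: pselect => // nterm'; exists (c k).
Qed.

Lemma adam_run_T c : exists k, T_A (arun c k).
Proof. exact: (lA_wins (adam_run_consistent c)).2. Qed.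

Definition adam_reset x i := preceq 1 (gf x (glen x)) (gf x i) /\
  exists2 q, q \in supp (gf x i) & gf x i q <> Inf.

Let T_A_terminal x : T_A x -> terminal x.
Proof. by right. Qed.

Let T_A_reset x : T_A x -> exists2 i, (i < glen x)%N & adam_reset x i.
Proof. by case. Qed.

Lemma adam_alive_bounded :
  exists D, forall L, alive adam_act adam_next L -> (size L < D)%N.
Proof. exact: alive_bounded T_A_terminal adam_run_T. Qed.

Lemma in_Pi_adam_rcons L s : alive adam_act adam_next L -> in_Pi (apos (rcons L s)).
Proof.
move=> L_alive; have := (lA_wins (adam_run_consistent (nth s (rcons L s)))).1 (size L).+1.
by rewrite run_rcons // take_oversize ?size_rcons.
Qed.

Lemma in_Pi_adam L : alive adam_act adam_next L -> in_Pi (apos L).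
Proof.
by case/lastP: L => [_|L s /alive_belast]; [exact: in_Pi_init | exact: in_Pi_adam_rcons].
Qed.

Lemma adam_successor L s : alive adam_act adam_next L ->
  successor (apos L).2 s (lA (apos L) s).
Proof.
move=> /(in_Pi_adam_rcons s) [_ [/(_ (size L) s) + _]].
rewrite gpos_rcons glen_ext glen_gpos ltnSn => /(_ isT).
rewrite -(glen_gpos adam_act adam_next L) /gstep gf_ext // gf_last.
by rewrite gf_ext_last ga_ext ltnn eqxx.
Qed.

Definition adam_valid_obs o s O := (O \in Obs G) && (O :&: post s o != finset.set0).

(* Along plays consistent with [adam_strategy] the answer of [lA] is always a
   legal observation (see [adam_obs_next]); the fallback only serves other
   histories. *)
Definition adam_fix_obs o s O : {set Q} :=
  if adam_valid_obs o s O then O else odflt finset.set0 [pick O' | adam_valid_obs o s O'].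

Lemma adam_valid_fix_obs o s O : o \in Obs G -> adam_valid_obs o s (adam_fix_obs o s O).
Proof.
rewrite /adam_fix_obs; case: ifP => // _ oO; case: pickP => // noO.
have [O' O'O sub_O'] := exists_obs_sub_post HG s oO; have [q qO'] := obs_neq0 HG O'O.
move: (noO O'); rewrite /adam_valid_obs O'O /=; apply: contraFT => _.
by apply/set0Pn; exists q; rewrite inE qO' (fintype.subsetP sub_O').
Qed.

Let adam_alive_traj c k :
  alive adam_act adam_next (traj adam_act adam_next adam_reset c k).
Proof. exact: (alive_traj T_A_terminal adam_run_T T_A_reset (c := c) (k := k)). Qed.

Section AdamStrategy.
Variable D : nat.
Hypothesis alive_lt_D : forall L, alive adam_act adam_next L -> (size L < D)%N.

Definition adam_mem (h : hist G) : D.-bseq Sig :=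
  foldl (fun m p => mem_step adam_act adam_next adam_reset m p.2) [bseq] h.1.

Definition adam_strategy : stratA G :=
  fun h s => adam_fix_obs h.2 s (supp (lA (apos (adam_mem h)) s)).

Lemma adam_strategy_fm : finite_memoryA adam_strategy.
Proof.
by exists (D.-bseq Sig), [bseq],
  (fun m _ s => mem_step adam_act adam_next adam_reset m s),
  (fun (m : D.-bseq Sig) o s => adam_fix_obs o s (supp (lA (apos m) s))).
Qed.

Lemma adam_strategy_valid : valid_stratA adam_strategy.
Proof.
move=> h s [o [s' [[_ [playO _]] hE]]].
have h2O : h.2 \in Obs G by rewrite hE; apply: playO.
exact/andP/adam_valid_fix_obs.
Qed.

Section AdamPlay.
Variables (o : nat -> {set Q}) (s : nat -> Sig).
Hypothesis o_s_play : is_play o s.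
Hypothesis o_adam : consistentA adam_strategy o s.

Let L k := traj adam_act adam_next adam_reset s k.
Let F k := (apos (L k)).2.
Let F' k := lA (apos (L k)) (s k).
Let reset k := terminal (apos (rcons (L k) (s k))).
Let cnt k := (\sum_(j < k) `[< reset j >])%N.

Let cntS k : cnt k.+1 = (cnt k + `[< reset k >])%N.
Proof. by rewrite /cnt big_ord_recr. Qed.

Let successor_F' k : successor (F k) (s k) (F' k).
Proof. exact: (adam_successor (s k) (adam_alive_traj (c := s) (k := k))). Qed.

Lemma adam_mem_traj k : adam_mem (hist_of o s k) = L k :> seq Sig.
Proof.
elim: k => [//|k IH]; rewrite /adam_mem hist_ofS foldl_rcons -/(adam_mem _) /=.
rewrite (mem_stepE T_A_terminal adam_run_T T_A_reset alive_lt_D) IH //.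
exact: adam_alive_traj.
Qed.

Lemma adam_obs_next k : supp (F k) = o k -> o k.+1 = supp (F' k).
Proof.
move=> suppF; rewrite o_adam /adam_strategy /= adam_mem_traj -/(F' k) /adam_fix_obs.
have [F'O sub_F' _] := successor_F' k; rewrite suppF in sub_F'.
suff -> : adam_valid_obs (o k) (s k) (supp (F' k)) by [].
rewrite /adam_valid_obs F'O /=; have [q qF'] := obs_neq0 HG F'O.
by apply/set0Pn; exists q; rewrite inE qF' (fintype.subsetP sub_F').
Qed.

Lemma adam_traj_nreset k : ~ reset k -> F k.+1 = F' k.
Proof. by move=> nterm; rewrite /F /L /= (normalize_nterm _ nterm) gpos_rcons. Qed.

Lemma adam_traj_reset k : reset k ->
  preceq 1 (F' k) (F k.+1) /\ exists2 q, q \in supp (F k.+1) & F k.+1 q <> Inf.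
Proof.
move=> term; rewrite /F /L /=.
have [i le_ik [-> [prec fin]]] :=
  normalize_term T_A_terminal adam_run_T T_A_reset
    (adam_alive_traj (c := s) (k := k)) term.
move: prec fin; rewrite gf_last gf_gpos ?size_rcons ?(leqW le_ik) // take_rcons_le //.
by rewrite gpos_rcons.
Qed.

Lemma adam_traj_supp k : supp (F k) = o k.
Proof.
elim: k => [|k IH]; first by rewrite /F /L /= supp_fI; case: o_s_play.
rewrite (adam_obs_next IH).
by have [/adam_traj_reset [[<-]] | /adam_traj_nreset ->] := pselect (reset k).
Qed.

Lemma adam_traj_size k : (k <= size (L k) + D * cnt k)%N.
Proof.
elim: k => [//|k IH]; rewrite cntS.
have [term | nterm] := pselect (reset k).
  have : (size (L k) < D)%N := alive_lt_D (adam_alive_traj (c := s) (k := k)).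
  rewrite asboolT //=; lia.
rewrite asboolF // addn0 /L /= (normalize_nterm _ nterm) size_rcons; lia.
Qed.

(* Without resets after time [m] the stored sequence would grow beyond [D]. *)
Lemma adam_resets m : exists n, (m <= n)%N /\ reset n.
Proof.
apply: contrapT => /forallNP no_reset.
have cnt_m d : cnt (m + d) = cnt m.
  elim: d => [|d IH]; first by rewrite addn0.
  rewrite addnS cntS IH asboolF ?addn0 // => term.
  by apply: (no_reset (m + d)%N); rewrite leq_addr.
have := adam_traj_size (m + (D * cnt m + D)).
have : (size (L (m + (D * cnt m + D))) < D)%N.
  exact: alive_lt_D (adam_alive_traj (c := s) (k := _)).
rewrite cnt_m; lia.
Qed.

Lemma adam_next_val k q a : F k.+1 q = Fin a ->
  exists a', F' k q = Fin a' /\ (a' + (cnt k.+1)%:Z <= a + (cnt k)%:Z)%R.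
Proof.
rewrite cntS; have [term | nterm] := pselect (reset k); last first.
  by rewrite asboolF // addn0 adam_traj_nreset // => ->; exists a.
have [[supp_eq prec] _] := adam_traj_reset term => Fa.
have qF' : q \in supp (F' k) by rewrite supp_eq inE Fa.
move: (prec q qF'); rewrite Fa asboolT // PoszD.
by case: (F' k q) => [||a'] //= le_a'; exists a'; split => //; lia.
Qed.

Definition adam_path (q : nat -> Q) n := forall j, (j <= n)%N ->
  [/\ q j \in o j, ((j < n)%N -> Delta (q j) (s j) (q j.+1)) &
      exists a, F j (q j) = Fin a /\ (wsum s q j + (cnt j)%:Z <= a)%R].

Lemma adam_path_le (q : nat -> Q) m n : (m <= n)%N -> adam_path q n -> adam_path q m.
Proof.
move=> le_mn qn j le_jm; have [? Dq ?] := qn j (leq_trans le_jm le_mn).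
by split => // lt_jm; apply: Dq; apply: leq_trans le_mn.
Qed.

Lemma adam_path_eq (q q' : nat -> Q) n :
  (forall j, (j <= n)%N -> q j = q' j) -> adam_path q n -> adam_path q' n.
Proof.
move=> qq' qn j le_jn; have [qo Dq [a [Fa le_a]]] := qn j le_jn.
split; first by rewrite -qq'.
  by move=> lt_jn; rewrite -!qq' //; apply: Dq.
exists a; rewrite -qq' -?(@eq_wsum _ _ q q' j) // => i le_ij.
exact: qq' (leq_trans le_ij le_jn).
Qed.

Lemma adam_path_back k q1 a : q1 \in o k -> F k q1 = Fin a ->
  exists q : nat -> Q, adam_path q k /\ q k = q1.
Proof.
elim: k q1 a => [|k IH] q1 a q1o Fa.
  case: o_s_play q1o => o0 _; rewrite o0 => /set1P q1I.
  exists (fun=> qI G); split => // j; rewrite leqn0 => /eqP->.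
  split; [by rewrite o0 inE | by [] |].
  by exists 0%R; rewrite /F /L /= /fI eqxx /wsum big_ord0 /cnt big_ord0.
have [a' [F'a le_a']] := adam_next_val Fa.
have q1F' : q1 \in supp (F' k) by rewrite inE F'a.
have [|q' [q'F Dq' F'q1]] := successor_pred (successor_F' k) q1F'; first by rewrite F'a.
move: F'q1; rewrite F'a; case Fq': (F k q') => [||b] //= [a'E].
have q'o : q' \in o k by rewrite -adam_traj_supp.
have [q [qk qkq']] := IH q' b q'o Fq'.
exists (fun j => if (j <= k)%N then q j else q1); split; last by rewrite ltnn.
move=> j; rewrite leq_eqVlt => /orP [/eqP-> | ]; last first.
  rewrite ltnS => le_jk; have [qjo Dq bound] := qk j le_jk.
  rewrite le_jk; split => //.
    move=> _; case: (ltnP j k) => [lt_jk | le_kj]; first exact: Dq.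
    have -> : j = k by apply/eqP; rewrite eqn_leq le_jk.
    by rewrite qkq'.
  have [b0 [Fb0 le_b0]] := bound; exists b0; split => //.
  rewrite (@eq_wsum _ _ _ q j) // => i le_ij.
  by rewrite (leq_trans le_ij le_jk).
rewrite ltnn; split => [//||]; first by rewrite ltnn.
exists a; split => //.
rewrite wsumS leqnn (@eq_wsum _ _ _ q k) => [/=|i ->//].
have [_ _ [b' [Fb' le_b']]] := qk k (leqnn k).
move: Fb'; rewrite qkq' Fq' => -[b'E]; subst b'.
by rewrite ltnn; lia.
Qed.

Lemma adam_path_exists m : exists q, adam_path q m.
Proof.
have [n [le_mn reset_n]] := adam_resets m.
have [_ [q1 q1F fin]] := adam_traj_reset reset_n.
move: q1F fin; rewrite inE; case Fq1: (F n.+1 q1) => [||a] // _ _.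
have q1o : q1 \in o n.+1 by rewrite -adam_traj_supp inE Fq1.
have [q [qn _]] := adam_path_back q1o Fq1.
by exists q; apply: adam_path_le qn; apply: leqW.
Qed.

Lemma adam_path_inf : exists q, forall n, adam_path q n.
Proof.
pose P (p : seq Q) := if p is [::] then True else adam_path (nth (qI G) p) (size p).-1.
have P_mkseq (q : nat -> Q) n : P (mkseq q n.+1) <-> adam_path q n.
  rewrite /P; case E: (mkseq q n.+1) => [|x p].
    by move/(congr1 size): E; rewrite size_mkseq.
  have -> : (size (x :: p)).-1 = n by rewrite -E size_mkseq.
  by split; apply: adam_path_eq => j le_jn; rewrite -E nth_mkseq.
have P_rcons l (x : Q) : P (rcons l x) -> P l.
  case: l => [//|y l]; rewrite /P size_rcons /= => /(adam_path_le (leqnSn _)).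
  apply: adam_path_eq => j le_jl; rewrite -rcons_cons nth_rcons /=.
  by rewrite ltnS le_jl.
have P_all n : exists2 l, size l = n & P l.
  case: n => [|n]; first by exists [::].
  have [q qn] := adam_path_exists n.
  by exists (mkseq q n.+1); rewrite ?size_mkseq //; apply/P_mkseq.
have [f Pf] := koenig P_rcons P_all.
by exists f => n; apply/P_mkseq.
Qed.

Lemma adam_play_loses : ~ play_winE o s.
Proof.
move=> win; have [q q_path] := adam_path_inf.
have q_conc : is_concrete o s q.
  by move=> i; have [qi Dqi _] := q_path i.+1 i (leqnSn i); split => //; apply: Dqi.
have D0 : (0 < D)%N by apply: (alive_lt_D (@alive_nil _ _ adam_act adam_next)).
apply: (@limn_einf_avg_lt0 (wsum s q) ((D * D)%:Z * wmax G + D%:Z) D D0 _ (win q q_conc)).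
move=> n; have [_ _ [a [Fa le_a]]] := q_path n n (leqnn n).
have L_alive := adam_alive_traj (c := s) (k := n).
have ub_a : (a <= (size (L n))%:Z * wmax G)%R.
  rewrite -(glen_gpos adam_act adam_next).
  apply: (in_Pi_gf_le (s 0) (in_Pi_adam L_alive) (leqnn _)).
  by rewrite gf_last; exact: Fa.
have size_n : (size (L n) < D)%N := alive_lt_D L_alive.
have n_le := adam_traj_size n.
have wsum_le : (wsum s q n <= D%:Z * wmax G - (cnt n)%:Z)%R.
  have : ((size (L n))%:Z * wmax G <= D%:Z * wmax G)%R.
    by rewrite ler_wpM2r // lez_nat ltnW.
  by rewrite lerBrDr => /(le_trans ub_a); apply: le_trans.
have wsumD : (wsum s q n * D%:Z <= (D%:Z * wmax G - (cnt n)%:Z) * D%:Z)%R.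
  by rewrite ler_wpM2r.
rewrite PoszM; nia.
Qed.

End AdamPlay.

Lemma adam_strategy_wins : winningA adam_strategy.
Proof. by move=> o s; apply: adam_play_loses. Qed.

End AdamStrategy.

End Adam.

Theorem theorem3 (G : mpg) (HG : wf_mpg G) :
  (Eve_wins_Gamma G -> Eve_wins_fm G) /\
  (Adam_wins_Gamma G -> Adam_wins_fm G).
Proof.
split.
  move=> [lE lE_wins]; have [D alive_lt_D] := eve_alive_bounded HG lE_wins.
  exists (eve_strategy lE D).
  by split; [exact: eve_strategy_fm | exact: eve_strategy_wins alive_lt_D].
move=> [lA lA_wins]; have [D alive_lt_D] := adam_alive_bounded lA_wins.
exists (adam_strategy lA D); split; first exact: adam_strategy_valid.
by split; [exact: adam_strategy_fm | exact: adam_strategy_wins alive_lt_D].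
Qed.
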